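(* Let $\Psi=\langle\mathcal{S},\mathcal{P},\mathcal{T}\rangle$ be an SPL with internally consistent (e.g. canonical) traceability relation, and let $F\in\mathcal{S}$ with $Prop(F)=(f'_1,\dots,f'_m)$. Then $F$ is existentially explicit if and only if the quantified Boolean formula $\exists c'_1\cdots c'_n\,[\,C_I(c'_1,\dots,c'_n)\wedge f\_realizes(c'_1,\dots,c'_n,f'_1,\dots,f'_m)\,]$ is true.
   Context: $\mathcal{F}=\{f_1,\dots,f_m\}$ features, $\mathcal{C}=\{c_1,\dots,c_n\}$ components, scope $\mathcal{S}\subseteq\mathcal{P}ow(\mathcal{F})$, platform $\mathcal{P}\subseteq\mathcal{P}ow(\mathcal{C})$, $\mathcal{T}=\langle prov,req\rangle$ with $prov,req:\mathcal{F}\to\mathcal{P}ow(\mathcal{P}ow(\mathcal{C}))$. $implements(C,f)$ iff $\exists C_1\in prov(f),C_2\in req(f)$ with $C_2\subseteq C_1\subseteq C$; $Provided\_by(C)=\{f:implements(C,f)\}$; $\mathrm{Realizes}(C,F)$ iff $F=Provided\_by(C)$. $F\in\mathcal{S}$ is existentially explicit if some $C\in\mathcal{P}$ satisfies $\mathrm{Realizes}(C,F)$. Internally consistent: for every $f$ and $C\in prov(f)$ there is $C'\in req(f)$ with $C'\subseteq C$. $Prop(F)\in\{0,1\}^m$ with $f'_j=1$ iff $f_j\in F$. With Boolean variables $c_1,\dots,c_n$: $formula\_prov(f)=\bigvee_{S\in prov(f)}\bigwedge_{c_i\in S}c_i$ (FALSE if $prov(f)=\emptyset$); $f\_implements(c'_1,\dots,c'_n,f)=\forall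 c_1\cdots c_n\{[\bigwedge_i(c'_i\Rightarrow c_i)]\Rightarrow formula\_prov(f)\}$; $f\_realizes(c',f')=\bigwedge_{j=1}^m(f'_j\Leftrightarrow f\_implements(c',f_j))$. $C_I(c'_1,\dots,c'_n)=\bigvee_{A\in\mathcal{P}}\bigwedge_{i=1}^n \ell^A_i$, where $\ell^A_i=c'_i$ if $c_i\in A$ and $\ell^A_i=\neg c'_i$ otherwise; thus $C_I(c')$ holds iff $c'=Prop(A)$ for some $A\in\mathcal{P}$. *)

(* Features are 'I_m, components are 'I_n. *)
From mathcomp Require Import all_boot.
Set Implicit Arguments. Unset Strict Implicit. Unset Printing Implicit Defensive.

Section SPL.
Variables (m n : nat).
(* traceability relation T = <prov, req> *)
Variables (prov req : 'I_m -> {set {set 'I_n}}).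

Definition implements (C : {set 'I_n}) (f : 'I_m) : bool :=
  [exists C1 in prov f, exists C2 in req f, (C2 \subset C1) && (C1 \subset C)].

Definition Provided_by (C : {set 'I_n}) : {set 'I_m} :=
  [set f | implements C f].

Definition Realizes (C : {set 'I_n}) (F : {set 'I_m}) : Prop :=
  F = Provided_by C.

Definition existentially_explicit (P : {set {set 'I_n}}) (F : {set 'I_m}) : Prop :=
  exists2 C, C \in P & Realizes C F.

Definition internally_consistent : Prop :=
  forall f C, C \in prov f -> exists2 C', C' \in req f & C' \subset C.

Definition PropF (F : {set 'I_m}) : {ffun 'I_m -> bool} := [ffun j => j \in F].

(* Boolean formulas are represented semantically, as Boolean functions
   of the assignment to the variables c_1..c_n. *)
Definition formula_prov (f : 'I_m) (c : {ffun 'I_n -> bool}) : bool :=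
  [exists S in prov f, [forall i in S, c i]].   (* empty disjunction = false *)

Definition f_implements (c' : {ffun 'I_n -> bool}) (f : 'I_m) : bool :=
  [forall c : {ffun 'I_n -> bool},
     [forall i, c' i ==> c i] ==> formula_prov f c].

Definition f_realizes (c' : {ffun 'I_n -> bool}) (f' : {ffun 'I_m -> bool}) : bool :=
  [forall j, f' j == f_implements c' j].

Definition C_I (P : {set {set 'I_n}}) (c' : {ffun 'I_n -> bool}) : bool :=
  [exists A in P, [forall i, c' i == (i \in A)]].

Definition qbf_explicit (P : {set {set 'I_n}}) (f' : {ffun 'I_m -> bool}) : bool :=
  [exists c' : {ffun 'I_n -> bool}, C_I P c' && f_realizes c' f'].

End SPL.

(* A Boolean assignment c' to the component variables is the
   characteristic vector of a component set C.  The universally quantified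
   formula f_implements(c', f) says that every superset of C satisfies some
   product S of prov f; instantiating the universal quantifier at C itself
   yields S ⊆ C, and internal consistency supplies C' ∈ req f with C' ⊆ S,
   i.e. implements(C, f).  Conversely implements(C, f) gives S ∈ prov f
   with S ⊆ C, which every superset of C inherits.  Hence f_implements on
   characteristic vectors is exactly implements (f_implements_charvec). *)

From mathcomp Require Import all_boot.

Set Implicit Arguments.
Unset Strict Implicit.
Unset Printing Implicit Defensive.

Section QBFCharacterisation.

Variables (m n : nat) (prov req : 'I_m -> {set {set 'I_n}}).

Definition charvec (C : {set 'I_n}) : {ffun 'I_n -> bool} := [ffun i => i \in C].

Lemma formula_prov_charvec (f : 'I_m) (C : {set 'I_n}) :
  formula_prov prov f (charvec C) = [exists S in prov f, S \subset C].
Proof.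
apply/existsP/existsP => -[S /andP [HS HSC]]; exists S; rewrite HS /=.
- by apply/subsetP => i Hi; move/forallP/(_ i): HSC; rewrite Hi ffunE.
- by apply/forallP => i; apply/implyP => Hi; rewrite ffunE (subsetP HSC).
Qed.

(* The universal quantifier of f_implements is attained at c' itself. *)
Lemma f_implements_formula_prov (c' : {ffun 'I_n -> bool}) (f : 'I_m) :
  f_implements prov c' f -> formula_prov prov f c'.
Proof.
move/forallP/(_ c')/implyP; apply.
by apply/forallP => i; apply/implyP.
Qed.

Lemma formula_prov_f_implements (C : {set 'I_n}) (f : 'I_m) :
  formula_prov prov f (charvec C) -> f_implements prov (charvec C) f.
Proof.
rewrite formula_prov_charvec => /existsP [S /andP [HS HSC]].
apply/forallP => c; apply/implyP => /forallP Hc.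
apply/existsP; exists S; rewrite HS /=; apply/forallP => i; apply/implyP => Hi.
by have := Hc i; rewrite ffunE (subsetP HSC i Hi).
Qed.

Hypothesis consistent : internally_consistent prov req.

Lemma f_implements_charvec (C : {set 'I_n}) (f : 'I_m) :
  f_implements prov (charvec C) f = implements prov req C f.
Proof.
apply/idP/idP => [/f_implements_formula_prov | ].
- rewrite formula_prov_charvec => /existsP [S /andP [HS HSC]].
  have [C' HC' HC'S] := consistent HS.
  apply/existsP; exists S; rewrite HS /=.
  by apply/existsP; exists C'; rewrite HC' HC'S HSC.
- case/existsP => S /andP [HS /existsP [C' /andP [_ /andP [_ HSC]]]].
  apply: formula_prov_f_implements; rewrite formula_prov_charvec.
  by apply/existsP; exists S; rewrite HS.
Qed.

Lemma f_realizes_charvecP (C : {set 'I_n}) (F : {set 'I_m}) :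
  reflect (Realizes prov req C F) (f_realizes prov (charvec C) (PropF F)).
Proof.
apply: (iffP forallP) => [HF | ->].
- by apply/setP => j; move/eqP: (HF j); rewrite ffunE f_implements_charvec inE.
- by move=> j; rewrite ffunE f_implements_charvec inE.
Qed.

End QBFCharacterisation.

Lemma C_I_charvecP (n : nat) (P : {set {set 'I_n}}) (c' : {ffun 'I_n -> bool}) :
  reflect (exists2 A, A \in P & c' = charvec A) (C_I P c').
Proof.
apply: (iffP existsP) => [[A /andP [HA /forallP Hc]] | [A HA ->]].
- by exists A => //; apply/ffunP => i; rewrite ffunE; apply/eqP.
- by exists A; rewrite HA /=; apply/forallP => i; rewrite ffunE.
Qed.

Theorem mainTheorem8 (m n : nat) (S : {set {set 'I_m}}) (P : {set {set 'I_n}})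
    (prov req : 'I_m -> {set {set 'I_n}}) (F : {set 'I_m}) :
  internally_consistent prov req ->
  F \in S ->
  existentially_explicit prov req P F <-> qbf_explicit prov P (PropF F).
Proof.
move=> consistent _; split.
- case=> C HC HR; apply/existsP; exists (charvec C).
  rewrite (introT (C_I_charvecP P _)); last by exists C.
  exact/(f_realizes_charvecP consistent).
- case/existsP => c' /andP [/C_I_charvecP [A HA ->] HR].
  by exists A => //; apply/(f_realizes_charvecP consistent).
Qed.
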